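(* Let $R$ be a commutative ring. Then $R$ is $\pi$-regular if and only if $R$ is feckly clean and every prime ideal of $R$ is maximal.
   Context: Rings have identity; $J(R)$ is the Jacobson radical. A ring $R$ is $\pi$-regular if for every $a\in R$ there is $n\in\mathbb{N}$ with $a^n\in a^nRa^n$. An element $u\in R$ is full if $RuR=R$. An element $a\in R$ is feckly clean if there exist $e\in R$ and a full element $u\in R$ with $a=e+u$ and $eR(1-e)\subseteq J(R)$; $R$ is feckly clean if every element is feckly clean. *)

From HB Require Import structures.
From mathcomp Require Import all_boot all_order all_algebra.
Set Implicit Arguments. Unset Strict Implicit. Unset Printing Implicit Defensive.
Import GRing.Theory.
Local Open Scope ring_scope.

Section FecklyDefs.
Variable R : comPzRingType.

(* An ideal of R, as a predicate (R commutative, so two-sided = one-sided). *)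
Definition is_ideal (I : R -> Prop) : Prop :=
  [/\ I 0, (forall x y, I x -> I y -> I (x + y)) & (forall r x, I x -> I (r * x))].

Definition is_prime_ideal (I : R -> Prop) : Prop :=
  [/\ is_ideal I, ~ I 1 & (forall a b, I (a * b) -> I a \/ I b)].

Definition is_maximal_ideal (M : R -> Prop) : Prop :=
  [/\ is_ideal M, ~ M 1 &
      (forall J : R -> Prop, is_ideal J -> (forall x, M x -> J x) ->
         (forall x, J x <-> M x) \/ J 1)].

Definition jacobson (x : R) : Prop :=
  forall M : R -> Prop, is_maximal_ideal M -> M x.

Definition pi_regular : Prop :=
  forall a : R, exists n : nat, exists b : R,
    a ^+ n.+1 = a ^+ n.+1 * b * a ^+ n.+1.

(* u is full: RuR = R, i.e. 1 is a finite sum of elements r u s. *)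
Definition full (u : R) : Prop :=
  exists (n : nat) (r s : 'I_n -> R), \sum_(i < n) r i * u * s i = 1.

Definition feckly_clean_elt (a : R) : Prop :=
  exists e u : R, [/\ a = e + u, full u & forall r : R, jacobson (e * r * (1 - e))].

Definition feckly_clean : Prop := forall a : R, feckly_clean_elt a.

End FecklyDefs.

(* If a^(n+1) = a^(n+1) b a^(n+1), then f = a^(n+1) b is idempotent, a f is a
   unit of the corner fR and a (1 - f) is nilpotent; putting the nilpotent part
   into e = (1 - f) + a (1 - f) leaves a unit u = a f - (1 - f), and e (1 - e)
   is nilpotent, hence lies in every maximal ideal.  Since
   a^(n+1) (1 - b a^(n+1)) = 0, a prime ideal P missing a contains
   1 - b a^(n+1), so any ideal containing P and a contains 1.
   Conversely, if every prime is maximal,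
   fix a and let S be the multiplicative set of the a^k (1 - a r).  If 0 were
   not in S, an ideal maximal among those missing S would be a prime, hence
   maximal, ideal P; as a lies in S but not in P, 1 = p + r a for some p in P,
   i.e. P meets S at 1 - r a.  So a^k (1 - a r) = 0, which makes a pi-regular. *)
From mathcomp Require Import all_boot all_order all_algebra.
From mathcomp Require Import ring boolp classical_sets.
Set Implicit Arguments. Unset Strict Implicit. Unset Printing Implicit Defensive.
Import GRing.Theory.
Local Open Scope ring_scope.

Section Ideals.
Variable R : comPzRingType.
Implicit Types (J M P : R -> Prop) (a x y : R).

Definition ideal_adjoin M a : R -> Prop :=
  fun y => exists m r, M m /\ y = m + r * a.

Lemma is_ideal_adjoin M a : is_ideal M -> is_ideal (ideal_adjoin M a).
Proof.
case=> M0 MD MM; split.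
- by exists 0, 0; rewrite mul0r addr0.
- move=> _ _ [m1 [r1 [Mm1 ->]]] [m2 [r2 [Mm2 ->]]].
  by exists (m1 + m2), (r1 + r2); split; [exact: MD | ring].
- move=> s _ [m [r [Mm ->]]].
  by exists (s * m), (s * r); split; [exact: MM | ring].
Qed.

Lemma ideal_adjoin_sub M a x : M x -> ideal_adjoin M a x.
Proof. by move=> Mx; exists x, 0; rewrite mul0r addr0. Qed.

Lemma ideal_adjoin_mem M a : is_ideal M -> ideal_adjoin M a a.
Proof. by case=> M0 _ _; exists 0, 1; rewrite mul1r add0r. Qed.

Lemma maximal_ideal_prime M : is_maximal_ideal M -> is_prime_ideal M.
Proof.
case=> iM M1 maxM; split => // a b Mab.
have [Ma|Ma] := pselect (M a); [by left | right].
have [eqM|[m [r [Mm e1]]]] :=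
  maxM _ (is_ideal_adjoin a iM) (@ideal_adjoin_sub M a).
  by case: Ma; apply/eqM/ideal_adjoin_mem.
have -> : b = b * m + r * (a * b) by rewrite -[b in LHS]mulr1 e1; ring.
by case: iM => _ MD MM; apply: MD; apply: MM.
Qed.

Lemma prime_ideal_pow P x k : is_prime_ideal P -> P (x ^+ k) -> P x.
Proof.
case=> _ P1 PM; elim: k => [|k IHk]; first by rewrite expr0.
by rewrite exprS => /PM [] // /IHk.
Qed.

Lemma nilpotent_jacobson x k : x ^+ k = 0 -> jacobson x.
Proof.
move=> xk0 M /maximal_ideal_prime pM; apply: (prime_ideal_pow (k := k)) => //.
by rewrite xk0; case: pM => [[]].
Qed.

Lemma unit_full (u v : R) : v * u = 1 -> full u.
Proof. by move=> vu1; exists 1%N, (fun=> v), (fun=> 1); rewrite big_ord1 mulr1. Qed.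

End Ideals.

Section PiRegularElement.
Variables (R : comPzRingType) (a b : R) (n : nat).
Hypothesis pi_a : a ^+ n.+1 = a ^+ n.+1 * b * a ^+ n.+1.

Let f := a ^+ n.+1 * b.

Lemma pi_idempotent : f * f = f.
Proof. by rewrite {2}/f mulrA -pi_a. Qed.

Lemma pi_corner_unit : (a ^+ n * b * f - (1 - f)) * (a * f - (1 - f)) = 1.
Proof.
have acf : a * (a ^+ n * b) * f = f by rewrite mulrA -exprS /f mulrA -pi_a.
have -> : (a ^+ n * b * f - (1 - f)) * (a * f - (1 - f)) =
    a * (a ^+ n * b) * f * f - (a + a ^+ n * b) * (f - f * f) + (1 - f - f + f * f).
  by ring.
by rewrite -[_ * f * f]mulrA pi_idempotent acf; ring.
Qed.

Lemma pi_idempotentC : (1 - f) * (1 - f) = 1 - f.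
Proof. by rewrite mulrBl mul1r mulrBr mulr1 pi_idempotent subrr subr0. Qed.

Lemma pi_corner_nilpotent : (a * (1 - f)) ^+ n.+1 = 0.
Proof.
have idem1f k : (1 - f) ^+ k.+1 = 1 - f.
  by elim: k => [|k IHk]; rewrite ?expr1 // exprS IHk pi_idempotentC.
by rewrite exprMn idem1f mulrBr mulr1 /f [_ * b]mulrC mulrA -pi_a subrr.
Qed.

Lemma pi_feckly_clean_elt : feckly_clean_elt a.
Proof.
pose e := (1 - f) + a * (1 - f).
exists e, (a * f - (1 - f)); split.
- by rewrite /e; ring.
- exact: unit_full pi_corner_unit.
- move=> r; apply: (@nilpotent_jacobson _ _ n.+1).
  have -> : e * r * (1 - e) = a * (1 - f) * (- (1 + a * (1 - f)) * r)
      + (1 + a *+ 2) * r * ((1 - f) - (1 - f) * (1 - f)) by rewrite /e; ring.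
  rewrite pi_idempotentC subrr mulr0 addr0.
  by rewrite exprMn pi_corner_nilpotent mul0r.
Qed.

End PiRegularElement.

Section PiRegularRing.
Variable R : comPzRingType.
Hypothesis piR : pi_regular R.

Lemma pi_regular_feckly_clean : feckly_clean R.
Proof. by move=> a; have [n [b pi_a]] := piR a; exact: pi_feckly_clean_elt pi_a. Qed.

Lemma pi_regular_prime_maximal (P : R -> Prop) :
  is_prime_ideal P -> is_maximal_ideal P.
Proof.
move=> pP; have [iP P1 PM] := pP; split => // J iJ PJ.
have [JP|] := pselect (forall x, J x -> P x); first by left=> x; split; auto.
move=> /existsNP[a /not_implyP[Ja Pa]]; right.
have [n [b pi_a]] := piR a.
have Pan : ~ P (a ^+ n.+1) by move/(prime_ideal_pow pP).
have [|//|Pbx] := PM (a ^+ n.+1) (1 - b * a ^+ n.+1).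
  by rewrite mulrBr mulr1 mulrA -pi_a subrr; case: iP.
have [_ JD JM] := iJ.
rewrite -(subrK (b * a ^+ n.+1) 1); apply: JD; first exact: PJ.
by apply: (JM); rewrite exprSr; apply: JM.
Qed.

End PiRegularRing.

Section IdealsAvoiding.
Variables (R : comPzRingType) (S : R -> Prop).
Hypothesis S0 : ~ S 0.

Definition addmul_closed (X : R -> Prop) :=
  (forall x y, X x -> X y -> X (x + y)) /\ (forall r x, X x -> X (r * x)).

Definition maximal_avoiding (M : R -> Prop) :=
  [/\ is_ideal M, forall y, S y -> ~ M y &
      forall J, is_ideal J -> (forall x, M x -> J x) ->
        (forall y, S y -> ~ J y) -> forall x, J x -> M x].

(* Zorn_bigcup also sees the empty chain, whose union is empty; hence the
   family of sets closed under + and R-multiplication, which are ideals as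
   soon as they are nonempty. *)
Lemma exists_maximal_avoiding : exists M, maximal_avoiding M.
Proof.
pose F (X : R -> Prop) := (forall y, S y -> ~ X y) /\ addmul_closed X.
have [|M [[avoidM [MD MM]] maxM]] := @Zorn_bigcup R F.
  move=> C CF Ctot; split; first by move=> y Sy [X /CF[SX _] /SX].
  split=> [x y [X CX Xx] [Y CY Yy]|r x [X CX Xx]]; last first.
    by exists X => //; apply: (CF X CX).2.2.
  have [XY|YX] := Ctot X Y CX CY.
  - by exists Y => //; apply: (CF Y CY).2.1 => //; apply: XY.
  - by exists X => //; apply: (CF X CX).2.1 => //; apply: YX.
have M0 : M 0.
  apply: contrapT => nM0; apply: (maxM (fun y => y = 0)).
    split=> [x Mx|/(_ 0 erefl)//]; case: nM0.
    by rewrite -(mul0r x); apply: MM.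
  split=> [y Sy /= y0|]; first by apply: S0; rewrite -y0.
  by split=> [x y /= -> ->|r x /= ->]; rewrite ?addr0 ?mulr0.
exists M; split=> // J [_ JD JM] MJ SJ x Jx.
apply: contrapT => Mx; apply: (maxM J); first by split=> // /(_ x Jx).
by split=> //; split.
Qed.

Hypotheses (S1 : S 1) (SM : forall x y, S x -> S y -> S (x * y)).

Lemma maximal_avoiding_prime (M : R -> Prop) :
  maximal_avoiding M -> is_prime_ideal M.
Proof.
case=> iM SM0 maxM; split=> // [/(SM0 1 S1)//|x y Mxy].
have meetS z : ~ M z -> exists2 s, S s & ideal_adjoin M z s.
  move=> Mz; apply: contrapT => noS; apply: Mz.
  apply: (maxM _ (is_ideal_adjoin z iM)) => [w|s Ss Ms|]; last first.
  - exact: ideal_adjoin_mem.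
  - by apply: noS; exists s.
  - exact: ideal_adjoin_sub.
apply: contrapT => /not_orP[Mx My].
have [s1 Ss1 [m1 [r1 [Mm1 e1]]]] := meetS x Mx.
have [s2 Ss2 [m2 [r2 [Mm2 e2]]]] := meetS y My.
apply: (SM0 (s1 * s2)); first exact: SM.
rewrite e1 e2.
have -> : (m1 + r1 * x) * (m2 + r2 * y) =
    (m2 + r2 * y) * m1 + r1 * x * m2 + r1 * r2 * (x * y) by ring.
by have [_ MD MMl] := iM; apply: (MD); [apply: (MD)|]; apply: MMl.
Qed.

Lemma exists_prime_avoiding : exists P : R -> Prop,
  is_prime_ideal P /\ forall y, S y -> ~ P y.
Proof.
have [M maxM] := exists_maximal_avoiding.
by exists M; split; [apply: maximal_avoiding_prime | case: maxM].
Qed.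

End IdealsAvoiding.

Lemma pi_regular_witness (R : comPzRingType) (a r : R) (k : nat) :
  a ^+ k * (1 - a * r) = 0 -> a ^+ k.+1 = a ^+ k.+1 * r ^+ k.+1 * a ^+ k.+1.
Proof.
move=> ak0; have ak : a ^+ k = a ^+ k * (a * r).
  by apply/eqP; rewrite -subr_eq0 -{1}[a ^+ k]mulr1 -mulrBr ak0.
have akj j : a ^+ k = a ^+ k * (a * r) ^+ j.
  by elim: j => [|j IHj]; rewrite ?expr0 ?mulr1 // exprSr mulrA -IHj.
rewrite [in LHS]exprS [in LHS](akj k.+1) exprMn.
by rewrite [RHS]mulrC mulrA -exprS mulrA.
Qed.

Lemma prime_maximal_pi_regular (R : comPzRingType) :
  (forall P : R -> Prop, is_prime_ideal P -> is_maximal_ideal P) ->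
  pi_regular R.
Proof.
move=> primeM a; pose S (y : R) := exists k r, y = a ^+ k * (1 - a * r).
have [[k [r /esym ak0]]|S0] := pselect (S 0).
  by exists k, (r ^+ k.+1); apply: pi_regular_witness ak0.
exfalso.
have S1 : S 1 by exists 0%N, 0; rewrite expr0 mulr0 subr0 mulr1.
have SM y z : S y -> S z -> S (y * z).
  move=> [i [r ->]] [j [s ->]]; exists (i + j)%N, (r + s - a * r * s).
  by rewrite exprD; ring.
have [P [pP SP]] := exists_prime_avoiding S0 S1 SM.
have [iP _ maxP] := primeM P pP.
have Sa : S a by exists 1%N, 0; rewrite expr1 mulr0 subr0 mulr1.
have [PaP|[p [r [Pp e1]]]] :=
  maxP _ (is_ideal_adjoin a iP) (@ideal_adjoin_sub _ P a).
  by apply: (SP a) => //; apply/PaP/ideal_adjoin_mem.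
apply: (SP p) => //; exists 0%N, r.
by rewrite expr0 mul1r e1 [a * r]mulrC addrK.
Qed.

Theorem corollary5p8 (R : comPzRingType) :
  pi_regular R <->
  (feckly_clean R /\
   forall P : R -> Prop, is_prime_ideal P -> is_maximal_ideal P).
Proof.
split=> [piR|[_ primeM]].
- by split; [apply: pi_regular_feckly_clean | apply: pi_regular_prime_maximal].
- exact: prime_maximal_pi_regular.
Qed.
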